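(* For any partition $\lambda$ and any integer $m\ge1$, $\omega_{\lambda}(r^{m-1},\dots,r,1;r;a,b)=\delta_{\lambda0}$, i.e. it equals $1$ if $\lambda=0$ and $0$ otherwise.
   Context: Fix $|p|<1$; parameters generic; $n\ge\ell(\lambda)$ fixed. $E(x)=(x;p)_\infty(p/x;p)_\infty$. For integer $m\ge0$, $(a)_m=\prod_{k=0}^{m-1}E(aq^k)$, for $m<0$, $(a)_m=1/(aq^m)_{-m}$; for a partition $\lambda$ with $n$ parts $(a)_\lambda=\prod_{i=1}^n(at^{1-i})_{\lambda_i}$; several arguments denote products; integer subscripts denote the single-integer symbol. $q^\lambda t^{\delta(n)}=(q^{\lambda_1}t^{n-1},\dots,q^{\lambda_n})$; $\mu\subseteq\lambda$ means $\mu_i\le\lambda_i$ for all $i$. $W$ functions: for $n$-part partitions with $\lambda_1\ge\mu_1\ge\dots\ge\lambda_n\ge\mu_n$, $\lambda_{n+1}=\mu_{n+1}=0$, $H_{\lambda/\mu}(q,p,t,b)=\prod_{1\le i<j\le n}\Big\{\frac{(q^{\mu_i-\mu_{j-1}}t^{j-i})_{\mu_{j-1}-\lambda_j}(q^{\lambda_i+\lambda_j}t^{3-j-i}b)_{\mu_{j-1}-\lambda_j}}{(q^{\mu_i-\mu_{j-1}+1}t^{j-i-1})_{\mu_{j-1}-\lambda_j}(q^{\lambda_i+\lambda_j+1}t^{2-j-i}b)_{\mu_{j-1}-\lambda_j}}\frac{(q^{\lambda_i-\mu_{j-1}+1}t^{j-i-1})_{\mu_{j-1}-\lambda_j}}{(q^{\lambda_i-\mu_{j-1}}t^{j-i})_{\mu_{j-1}-\lambda_j}}\Big\}\prod_{1\le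 i<j-1\le n}\frac{(q^{\mu_i+\lambda_j+1}t^{1-j-i}b)_{\mu_{j-1}-\lambda_j}}{(q^{\mu_i+\lambda_j}t^{2-j-i}b)_{\mu_{j-1}-\lambda_j}}$; for $x\in\mathbb{C}$, $W_{\lambda/\mu}(x;q,p,t,a,b)=H_{\lambda/\mu}\frac{(x^{-1},ax)_\lambda(qbx/t,qb/(axt))_\mu}{(x^{-1},ax)_\mu(qbx,qb/(ax))_\lambda}\prod_{i=1}^n\frac{E(bt^{1-2i}q^{2\mu_i})}{E(bt^{1-2i})}\frac{(bt^{1-2i})_{\mu_i+\lambda_{i+1}}}{(bqt^{-2i})_{\mu_i+\lambda_{i+1}}}t^{i(\mu_i-\lambda_{i+1})}$ (zero if the interlacing fails); recursively $W_{\lambda/\mu}(y,z_1,\dots,z_\ell;q,p,t,a,b)=\sum_\nu W_{\lambda/\nu}(yt^{-\ell};q,p,t,at^{2\ell},bt^\ell)W_{\nu/\mu}(z_1,\dots,z_\ell;q,p,t,a,b)$ over $\nu$ with $\lambda_1\ge\nu_1\ge\dots\ge\lambda_n\ge\nu_n\ge0$; $W_\lambda=W_{\lambda/0}$. Jackson coefficients (suppressing $q,p,t$): for $x\in\mathbb{C}$, $\omega_{\lambda/\mu}(x;r;a,b)=\frac{(x^{-1},ax)_\lambda}{(qbx,qb/(ax))_\lambda}\frac{(qbr^{-1}x,qb/(axr))_\mu}{(x^{-1},ax)_\mu}\frac{(r,br^{-1}t^{1-n})_\mu}{(qbr^{-2},qt^{n-1})_\mu}\prod_{i=1}^n\frac{E(br^{-1}t^{2-2i}q^{2\mu_i})}{E(br^{-1}t^{2-2i})}(qt^{2i-2})^{\mu_i}\prod_{1\le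 i<j\le n}\frac{(qt^{j-i})_{\mu_i-\mu_j}(br^{-1}t^{3-i-j})_{\mu_i+\mu_j}}{(qt^{j-i-1})_{\mu_i-\mu_j}(br^{-1}t^{2-i-j})_{\mu_i+\mu_j}}\,W_\mu(q^\lambda t^{\delta(n)};q,p,t,bt^{2-2n},br^{-1}t^{1-n})$; for $k\ge2$, recursively $\omega_{\lambda/\tau}(x_1,\dots,x_k;r;a,b)=\sum_{\mu:\tau\subseteq\mu\subseteq\lambda}\omega_{\lambda/\mu}(r^{1-k}x_1;r;ar^{2(k-1)},br^{k-1})\,\omega_{\mu/\tau}(x_2,\dots,x_k;r;a,b)$; $\omega_\lambda=\omega_{\lambda/0}$. *)

From HB Require Import structures.
From mathcomp Require Import all_boot all_order all_algebra.
From mathcomp Require Import complex.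
From mathcomp Require Import all_classical all_reals all_analysis.
Set Implicit Arguments. Unset Strict Implicit. Unset Printing Implicit Defensive.
Import Order.TTheory GRing.Theory Num.Theory.
Import numFieldNormedType.Exports.
Local Open Scope ring_scope.
Local Open Scope complex_scope.

(* 1-based access: part l i = l_i, and l_i = 0 for i beyond the size of l
   (so for an n-part partition l_{n+1} = 0). *)
Definition part (l : seq nat) (i : nat) : nat := nth 0%N l i.-1.

Fixpoint boxes (k N : nat) : seq (seq nat) :=
  if k is k'.+1 then [seq x :: s | x <- iota 0 N.+1, s <- boxes k' N]
  else [:: [::]].

Definition subpart (n : nat) (mu lam : seq nat) : bool :=
  all (fun i => part mu i <= part lam i)%N (iota 1 n).

Definition interlace (n : nat) (lam mu : seq nat) : bool :=
  all (fun i => (part mu i <= part lam i) && (part lam i.+1 <= part mu i))%N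
      (iota 1 n).

Section Elliptic.
Variable R : realType.
Local Notation C := R[i].
Variables (p q t : C).
Variable n : nat.        (* number of parts *)

(* E(x) = (x;p)_oo (p/x;p)_oo : the limit of the partial products,
   taken componentwise (real and imaginary parts) in R. *)
Definition theta (x : C) : C :=
  let s := fun N : nat => \prod_(k < N) ((1 - x * p ^+ k) * (1 - p ^+ k.+1 / x)) in
  (limn (fun N => complex.Re (s N)))%:C + 'i * (limn (fun N => complex.Im (s N)))%:C.

Definition pochn (a : C) (m : nat) : C := \prod_(k < m) theta (a * q ^+ k).

Definition poch (a : C) (m : int) : C :=
  match m with
  | Posz k => pochn a k
  | Negz k => (pochn (a * q ^ (Negz k)) k.+1)^-1
  end.

Definition pochP (a : C) (l : seq nat) : C :=
  \prod_(1 <= i < n.+1) poch (a * t ^ (1 - i%:Z)) (part l i)%:Z.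

(* (a)_lambda / (a)_mu, written in cancelled form
   prod_{i=1}^n (a t^{1-i} q^{mu_i})_{lambda_i - mu_i}
   (equal to the quotient as a meromorphic function of a, since
   (c)_k (c q^k)_{m-k} = (c)_m for all integers k, m). *)
Definition pochR (a : C) (l mu : seq nat) : C :=
  \prod_(1 <= i < n.+1)
     poch (a * t ^ (1 - i%:Z) * q ^+ part mu i) ((part l i)%:Z - (part mu i)%:Z).

Definition Hfun (b : C) (l mu : seq nat) : C :=
  let L := fun i => (part l i)%:Z in
  let M := fun i => (part mu i)%:Z in
  (\prod_(1 <= i < n.+1) \prod_(i.+1 <= j < n.+1)
     let e := M j.-1 - L j in
     (poch (q ^ (M i - M j.-1) * t ^ (j%:Z - i%:Z)) e
      * poch (q ^ (L i + L j) * t ^ (3 - j%:Z - i%:Z) * b) e)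
     / (poch (q ^ (M i - M j.-1 + 1) * t ^ (j%:Z - i%:Z - 1)) e
        * poch (q ^ (L i + L j + 1) * t ^ (2 - j%:Z - i%:Z) * b) e)
     * (poch (q ^ (L i - M j.-1 + 1) * t ^ (j%:Z - i%:Z - 1)) e
        / poch (q ^ (L i - M j.-1) * t ^ (j%:Z - i%:Z)) e))
  * (\prod_(1 <= i < n.+1) \prod_(i.+2 <= j < n.+2)
     let e := M j.-1 - L j in
     poch (q ^ (M i + L j + 1) * t ^ (1 - j%:Z - i%:Z) * b) e
     / poch (q ^ (M i + L j) * t ^ (2 - j%:Z - i%:Z) * b) e).

Definition W1 (x a b : C) (l mu : seq nat) : C :=
  if interlace n l mu then
    Hfun b l mu
    * pochR x^-1 l mu * pochR (a * x) l mu
    * pochP (q * b * x / t) mu * pochP (q * b / (a * x * t)) mu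
    / (pochP (q * b * x) l * pochP (q * b / (a * x)) l)
    * \prod_(1 <= i < n.+1)
        (theta (b * t ^ (1 - 2 * i%:Z) * q ^+ (2 * part mu i))
           / theta (b * t ^ (1 - 2 * i%:Z))
         * poch (b * t ^ (1 - 2 * i%:Z)) (part mu i + part l i.+1)%N%:Z
         / poch (b * q * t ^ (- 2 * i%:Z)) (part mu i + part l i.+1)%N%:Z
         * t ^ (i%:Z * ((part mu i)%:Z - (part l i.+1)%:Z)))
  else 0.

Fixpoint Wm (xs : seq C) (a b : C) (l mu : seq nat) {struct xs} : C :=
  match xs with
  | [::] => if l == mu then 1 else 0
  | [:: y] => W1 y a b l mu
  | y :: zs =>
      let k := size zs in
      \sum_(nu <- boxes n (part l 1) | interlace n l nu)
        W1 (y * t ^- k) (a * t ^+ (2 * k)) (b * t ^+ k) l nu * Wm zs a b nu mu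
  end.

Definition omega1 (x r a b : C) (l mu : seq nat) : C :=
  pochR x^-1 l mu * pochR (a * x) l mu
  / (pochP (q * b * x) l * pochP (q * b / (a * x)) l)
  * (pochP (q * b / r * x) mu * pochP (q * b / (a * x * r)) mu)
  * (pochP r mu * pochP (b / r * t ^ (1 - n%:Z)) mu)
  / (pochP (q * b / r ^+ 2) mu * pochP (q * t ^ (n%:Z - 1)) mu)
  * \prod_(1 <= i < n.+1)
      (theta (b / r * t ^ (2 - 2 * i%:Z) * q ^+ (2 * part mu i))
         / theta (b / r * t ^ (2 - 2 * i%:Z))
       * (q * t ^ (2 * i%:Z - 2)) ^+ part mu i)
  * \prod_(1 <= i < n.+1) \prod_(i.+1 <= j < n.+1)
      (poch (q * t ^ (j%:Z - i%:Z)) ((part mu i)%:Z - (part mu j)%:Z)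
       / poch (q * t ^ (j%:Z - i%:Z - 1)) ((part mu i)%:Z - (part mu j)%:Z)
       * poch (b / r * t ^ (3 - i%:Z - j%:Z)) (part mu i + part mu j)%N%:Z
       / poch (b / r * t ^ (2 - i%:Z - j%:Z)) (part mu i + part mu j)%N%:Z)
  * Wm [seq q ^+ part l i * t ^+ (n - i) | i <- iota 1 n]
       (b * t ^ (2 - 2 * n%:Z)) (b / r * t ^ (1 - n%:Z)) mu (nseq n 0%N).

Fixpoint omega (xs : seq C) (r a b : C) (l tau : seq nat) {struct xs} : C :=
  match xs with
  | [::] => if l == tau then 1 else 0
  | [:: x] => omega1 x r a b l tau
  | x :: zs =>
      let k1 := size zs in
      \sum_(mu <- boxes n (part l 1)
             | [&& sorted geq mu, subpart n tau mu & subpart n mu l])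
        omega1 (x / r ^+ k1) r (a * r ^+ (2 * k1)) (b * r ^+ k1) l mu
        * omega zs r a b mu tau
  end.

End Elliptic.

(* Genericity of the parameters: q,t,a,b,r nonzero and no nontrivial
   monomial q^e1 t^e2 a^e3 b^e4 r^e5 lies in p^Z (so that E does not
   vanish at any nontrivial monomial in the parameters). *)
Definition generic_params (R : realType) (p q t a b r : R[i]) : Prop :=
  [/\ q != 0, t != 0, a != 0, b != 0 & r != 0] /\
  forall e1 e2 e3 e4 e5 k : int,
    q ^ e1 * t ^ e2 * a ^ e3 * b ^ e4 * r ^ e5 = p ^ k ->
    [/\ e1 = 0, e2 = 0, e3 = 0, e4 = 0 & e5 = 0].

From mathcomp Require Import all_boot all_order all_algebra.
From mathcomp Require Import complex.
From mathcomp Require Import all_classical all_reals all_analysis.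
From mathcomp Require Import ring lra.
Import Order.TTheory GRing.Theory Num.Theory.
Import numFieldNormedType.Exports.
Import ComplexField.Normc.
Local Open Scope ring_scope.
Local Open Scope complex_scope.
Local Open Scope classical_set_scope.

(* In the recursion for omega the first variable [r^(m-1)] is rescaled by
   [r^(1-m)], so it is always evaluated at [x = 1].  There the factor
   [(x^-1)_lambda / (x^-1)_mu] contains [E(1) = 0] as soon as
   [lambda_1 > mu_1 = 0], so by induction on [m] only [mu = 0] survives in the
   sum, and [omega_lambda] reduces to [omega_{lambda/0}(1)], which vanishes for
   [lambda <> 0].  For [lambda = 0] every factor is [1] or [E(y)/E(y)] with [y]
   a monomial [b r^e t^e']; genericity keeps [y] off [p^Z], and off [p^Z] the
   product defining [E] converges to a nonzero limit because its factors are
   [1 + O(|p|^k)]. *)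

Section ComplexModulus.
Context {R : rcfType}.
Implicit Types z w : R[i].

Lemma normc_ge0 z : 0 <= normc z.
Proof. by case: z => x y; apply: sqrtr_ge0. Qed.

Lemma normc_gt0 z : z != 0 -> 0 < normc z.
Proof.
by move=> z0; rewrite lt_def normc_ge0 andbT; apply: contra z0 => /eqP/eq0_normc->.
Qed.

Lemma normcX z k : normc (z ^+ k) = normc z ^+ k.
Proof. by elim: k => [|k IH]; rewrite ?normc1 // !exprS normcM IH. Qed.

Lemma normc_sqr z : normc z ^+ 2 = complex.Re z ^+ 2 + complex.Im z ^+ 2.
Proof. by case: z => x y /=; rewrite sqr_sqrtr // addr_ge0 ?sqr_ge0. Qed.

Lemma normc_ReB z w : `|complex.Re z - complex.Re w| <= normc (z - w).
Proof.
case: z w => x y [x' y'] /=; rewrite -sqrtr_sqr; apply: ler_wsqrtr.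
by rewrite lerDl sqr_ge0.
Qed.

Lemma normc_ImB z w : `|complex.Im z - complex.Im w| <= normc (z - w).
Proof.
case: z w => x y [x' y'] /=; rewrite -sqrtr_sqr; apply: ler_wsqrtr.
by rewrite lerDr sqr_ge0.
Qed.

Lemma normc_norm z : `|z| = (normc z)%:C.
Proof. by case: z => x y; rewrite normc_def. Qed.

End ComplexModulus.

Section ConvergentProduct.
Variable R : realType.
Local Notation C := R[i].
Variables (g : nat -> C) (rho c : R).
Hypotheses (rho_ge0 : 0 <= rho) (rho_lt1 : rho < 1) (c_ge0 : 0 <= c).
Hypothesis g_neq0 : forall k, g k != 0.
Hypothesis g_near1 : forall k, normc (g k - 1) <= c * rho ^+ k.

Let s N := \prod_(k < N) g k.
Let D := c / (1 - rho).

Let D_ge0 : 0 <= D.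
Proof. by rewrite divr_ge0 // subr_ge0 ltW. Qed.

Let c_eq : c = D * (1 - rho).
Proof. by rewrite divfK // subr_eq0 gt_eqF. Qed.

Lemma geometric_eventually_lt (a e : R) : 0 < e ->
  exists K, forall N, (K <= N)%N -> a * rho ^+ N < e.
Proof.
move=> e_gt0; have rho1 : `|rho| < 1 by rewrite ger0_norm.
have lim_a_rho : (fun N => a * rho ^+ N) @ \oo --> 0.
  by rewrite -(mulr0 a); apply: cvgM; [exact: cvg_cst | exact: cvg_expr].
by have [K _ HK] := cvgr_lt _ lim_a_rho _ e_gt0; exists K => N /HK.
Qed.

(* Inductively [|s (N + j)| <= 2 |s N|], so the next factor moves the partial
   product by at most [2 |s N| c rho^(N + j)], and
   [c rho^(N + j) = D (rho^(N + j) - rho^(N + j + 1))] telescopes. *)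
Lemma prod_tail_telescope N : D * rho ^+ N <= 1 / 4 -> forall j,
  normc (s (N + j) - s N) <= 2 * normc (s N) * D * (rho ^+ N - rho ^+ (N + j)).
Proof.
move=> DN j; set A := normc (s N); have A_ge0 : 0 <= A := normc_ge0 _.
elim: j => [|j IH]; first by rewrite addn0 !subrr normc0 mulr0.
have rhoNj : 0 <= rho ^+ (N + j) := exprn_ge0 _ rho_ge0.
have rho_le : rho ^+ (N + j) <= rho ^+ N.
  by rewrite exprD ler_piMr ?exprn_ge0 // exprn_ile1 // ltW.
have sNj : normc (s (N + j)) <= 2 * A.
  apply: le_trans (_ : normc (s (N + j) - s N) + A <= _).
    by rewrite -[X in normc X](subrK (s N)) le_normcD.
  have := mulr_ge0 (mulr_ge0 (mulr_ge0 (ler0n R 2) A_ge0) D_ge0) rhoNj; nra.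
rewrite addnS /s big_ord_recr -/(s (N + j)) /=.
have -> : s (N + j) * g (N + j) - s N
          = (s (N + j) - s N) + s (N + j) * (g (N + j) - 1) by ring.
apply: le_trans (le_normcD _ _) _; rewrite normcM exprSr.
have := g_near1 (N + j); rewrite c_eq => gNj.
have := ler_pM (normc_ge0 _) (normc_ge0 _) sNj gNj.
have := mulr_ge0 (mulr_ge0 (mulr_ge0 (ler0n R 2) A_ge0) D_ge0) rhoNj; nra.
Qed.

Lemma prod_tail_close N j : D * rho ^+ N <= 1 / 4 ->
  normc (s (N + j) - s N) <= 2 * normc (s N) * (D * rho ^+ N).
Proof.
move=> DN; apply: le_trans (prod_tail_telescope _ DN j) _.
rewrite -mulrA ler_wpM2l ?mulr_ge0 ?normc_ge0 // ler_wpM2l // lerBlDr lerDl.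
exact: exprn_ge0.
Qed.

Let eventually_tail_small : exists K, forall N, (K <= N)%N -> D * rho ^+ N <= 1 / 4.
Proof.
have [|K HK] := geometric_eventually_lt D (1 / 4); first lra.
by exists K => N /HK/ltW.
Qed.

Lemma prod_eventually_comparable : exists K, exists2 A, 0 < A &
  forall N, (K <= N)%N ->
    [/\ D * rho ^+ N <= 1 / 4, A / 2 <= normc (s N) & normc (s N) <= 2 * A].
Proof.
have [K HK] := eventually_tail_small.
have sK_gt0 : 0 < normc (s K) by apply/normc_gt0/prodf_neq0.
exists K, (normc (s K)) => // N /subnKC <-; move: (N - K)%N => j.
have DK := HK K (leqnn K).
have h1 := prod_tail_close K j DK.
have h2 := le_normcD (s (K + j) - s K) (s K); rewrite subrK in h2.
have h3 := le_normcD (s K - s (K + j)) (s (K + j)).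
rewrite subrK -opprB normcN in h3.
have h4 := ler_wpM2l (ltW sK_gt0) DK.
split; [exact/HK/leq_addr | lra | lra].
Qed.

Lemma cvg_prod_lipschitz (F : C -> R) :
  (forall z w, `|F z - F w| <= normc (z - w)) -> cvg ((fun N => F (s N)) @ \oo).
Proof.
move=> F_lip; have [K [A A_gt0 HK]] := prod_eventually_comparable.
apply: cauchy_cvg; apply: cauchy_exP => e e_gt0.
have [K' HK'] := geometric_eventually_lt (4 * A * D) e e_gt0.
pose N := maxn K K'; have [DN _ sN] := HK N (leq_maxl _ _).
exists (F (s N)), N => // M /= /subnKC <-; rewrite /ball /=.
have h1 := F_lip (s N) (s (N + (M - N))); rewrite -[s N - _]opprB normcN in h1.
have h2 := prod_tail_close N (M - N) DN.
have h3 := ler_wpM2r (mulr_ge0 D_ge0 (exprn_ge0 N rho_ge0)) sN.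
have := HK' N (leq_maxr _ _); lra.
Qed.

Lemma prod_limit_neq0 : exists u v : R,
  [/\ (fun N => complex.Re (s N)) @ \oo --> u,
      (fun N => complex.Im (s N)) @ \oo --> v & 0 < u ^+ 2 + v ^+ 2].
Proof.
have Re_cvg := cvg_prod_lipschitz _ (@normc_ReB _).
have Im_cvg := cvg_prod_lipschitz _ (@normc_ImB _).
set u := limn _ in Re_cvg; set v := limn _ in Im_cvg.
exists u, v; split => //.
have [K [A A_gt0 HK]] := prod_eventually_comparable.
have sqr_lim : (fun N => normc (s N) ^+ 2) @ \oo --> u ^+ 2 + v ^+ 2.
  rewrite !expr2; under eq_fun do rewrite normc_sqr !expr2.
  by apply: cvgD; apply: cvgM.
apply: lt_le_trans (_ : (A / 2) ^+ 2 <= _); first by rewrite exprn_gt0 ?divr_gt0.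
rewrite -(cvg_lim _ sqr_lim) //; apply: limr_ge; first exact: cvgP sqr_lim.
exists K => // N /HK [_ sN _]; rewrite lerXn2r ?nnegrE ?divr_ge0 ?normc_ge0 //.
exact: ltW.
Qed.

End ConvergentProduct.

Lemma theta_neq0 (R : realType) (p x : R[i]) : normc p < 1 -> x != 0 ->
  (forall e : int, x != p ^ e) -> theta p x != 0.
Proof.
move=> p_lt1 x0 x_notin_pZ.
pose g k := (1 - x * p ^+ k) * (1 - p ^+ k.+1 / x).
have g_neq0 k : g k != 0.
  rewrite mulf_neq0 // subr_eq0 eq_sym.
    apply: contra (x_notin_pZ (- k%:Z)) => /eqP xpk.
    have pk0 : p ^+ k != 0.
      by apply: contra (oner_neq0 (R[i])) => /eqP pk0; rewrite -xpk pk0 mulr0.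
    by rewrite -invr_expz -[x](mulfK pk0) xpk mul1r.
  apply: contra (x_notin_pZ k.+1) => /eqP pkx.
  by apply/eqP; rewrite -[x]mul1r -pkx divfK.
have p_ge0 := normc_ge0 p.
have g_near1 k : normc (g k - 1) <= (normc x + normc x^-1 + 1) * normc p ^+ k.
  have -> : g k - 1 = p ^+ k * (- x - p * x^-1 + p ^+ k * p).
    by rewrite /g exprS; field.
  rewrite normcM normcX mulrC ler_wpM2r ?exprn_ge0 //.
  apply: le_trans (le_normcD _ _) _; apply: lerD; last first.
    by rewrite normcM normcX mulr_ile1 ?exprn_ge0 ?exprn_ile1 // ltW.
  apply: le_trans (le_normcD _ _) _; rewrite !normcN lerD // normcM.
  by rewrite ler_piMl ?normc_ge0 // ltW.
have c_ge0 : 0 <= normc x + normc x^-1 + 1 by rewrite !addr_ge0 ?normc_ge0.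
have [u [v [Re_u Im_v uv_gt0]]] :=
  @prod_limit_neq0 _ g _ _ p_ge0 p_lt1 c_ge0 g_neq0 g_near1.
rewrite /theta (cvg_lim _ Re_u) // (cvg_lim _ Im_v) //.
have -> : u%:C + 'i * v%:C = u +i* v :> R[i] by rewrite [RHS]complexE.
by apply: contraTneq uv_gt0 => -[-> ->]; rewrite expr0n addr0 ltxx.
Qed.

Lemma theta1 (R : realType) (p : R[i]) : theta p 1 = 0.
Proof.
have prod_eq0 N : (0 < N)%N ->
    \prod_(k < N) ((1 - 1 * p ^+ k) * (1 - p ^+ k.+1 / 1)) = 0.
  by case: N => // N _; rewrite big_ord_recl mul1r subrr !mul0r.
rewrite /theta !(@lim_near_cst _ _ _ _ _ 0) ?mulr0 ?addr0 //;
  by exists 1%N => // N /prod_eq0 ->.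
Qed.

Lemma poch0 (R : realType) (p q c : R[i]) : poch p q c 0 = 1.
Proof. exact: big_ord0. Qed.

Lemma sorted_nseq (T : Type) (leT : rel T) (x : T) k :
  leT x x -> sorted leT (nseq k x).
Proof. by move=> xx; elim: k => // -[|k] //= ->; rewrite xx. Qed.

Lemma part_nseq0 k i : part (nseq k 0%N) i = 0%N.
Proof. by rewrite /part nth_nseq if_same. Qed.

Lemma subpart_nseq0 n k l : subpart n (nseq k 0%N) l.
Proof. by apply/allP => i _; rewrite part_nseq0. Qed.

Lemma interlace_nseq0 n k k' : interlace n (nseq k 0%N) (nseq k' 0%N).
Proof. by apply/allP => i _; rewrite !part_nseq0. Qed.

Lemma boxes0 k : boxes k 0 = [:: nseq k 0%N].
Proof. by elim: k => //= k ->. Qed.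

Lemma size_boxes k N s : s \in boxes k N -> size s = k.
Proof.
elim: k s => [|k IH] s; first by rewrite inE => /eqP ->.
by case/allpairsP => -[x s'] [_ /IH <- ->].
Qed.

Lemma nseq0_in_boxes k N : nseq k 0%N \in boxes k N.
Proof.
elim: k => [|k IH]; first by rewrite inE.
by apply/allpairsP; exists (0%N, nseq k 0%N); rewrite mem_iota.
Qed.

Lemma uniq_boxes k N : uniq (boxes k N).
Proof.
elim: k => // k IH; apply: allpairs_uniq => //; first exact: iota_uniq.
by move=> [x s] [x' s'] _ _ /= [-> ->].
Qed.

Lemma sorted_geq_part1_gt0 s :
  sorted geq s -> s != nseq (size s) 0%N -> (0 < part s 1)%N.
Proof.
case: s => [|[|h] s] //= s_sorted; rewrite eqseq_cons eqxx /=.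
have geq_trans : transitive geq by move=> y x w /= yx wy; exact: leq_trans wy yx.
have /allP s_le0 := order_path_min geq_trans s_sorted.
move=> /eqP s_ne; exfalso; apply: s_ne.
by apply/all_pred1P/allP => k /s_le0; rewrite /= leqn0.
Qed.

Lemma desc_powersS (R : ringType) (x : R) k :
  [seq x ^+ (k.+1 - j) | j <- iota 0 k.+2]
  = x ^+ k.+1 :: [seq x ^+ (k - j) | j <- iota 0 k.+1].
Proof.
have -> : iota 0 k.+2 = 0%N :: [seq (1 + j)%N | j <- iota 0 k.+1].
  by rewrite -(iotaDl 1 0).
by rewrite map_cons subn0 -map_comp.
Qed.

Section Recursions.
Variable R : realType.
Local Notation C := R[i].
Variables (p q t : C) (n : nat).

Lemma Wm_cons x xs a b l mu : xs != [::] ->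
  Wm p q t n (x :: xs) a b l mu =
  \sum_(nu <- boxes n (part l 1) | interlace n l nu)
    W1 p q t n (x * t ^- size xs) (a * t ^+ (2 * size xs)) (b * t ^+ size xs) l nu
    * Wm p q t n xs a b nu mu.
Proof. by case: xs. Qed.

Lemma omega_cons x xs r a b l tau : xs != [::] ->
  omega p q t n (x :: xs) r a b l tau =
  \sum_(mu <- boxes n (part l 1) | [&& sorted geq mu, subpart n tau mu & subpart n mu l])
    omega1 p q t n (x / r ^+ size xs) r (a * r ^+ (2 * size xs)) (b * r ^+ size xs) l mu
    * omega p q t n xs r a b mu tau.
Proof. by case: xs. Qed.

Lemma omega1_at1_eq0 r a b l mu :
  (0 < n)%N -> part mu 1 = 0%N -> (0 < part l 1)%N ->
  omega1 p q t n 1 r a b l mu = 0.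
Proof.
move=> n_gt0 mu1 l1_gt0.
rewrite /omega1; suff -> : pochR p q t n 1^-1 l mu = 0 by rewrite !mul0r.
rewrite /pochR big_ltn // mu1 subr0 invr1 mul1r subrr expr0z expr0 !mulr1.
case: (part l 1) l1_gt0 => // k _; rewrite /poch /pochn big_ord_recl.
by rewrite expr0 mulr1 theta1 !mul0r.
Qed.

End Recursions.

Section ZeroPartition.
Variable R : realType.
Local Notation C := R[i].
Variables (p q t r b : C) (n : nat).
Hypotheses (t_neq0 : t != 0) (r_neq0 : r != 0).
Hypothesis theta_monomial_neq0 :
  forall e e' : int, theta p (b * r ^ e * t ^ e') != 0.

Local Notation O := (nseq n 0%N).

Definition b_monomial (y : C) := exists e e' : int, y = b * r ^ e * t ^ e'.

Lemma b_monomialXr k : b_monomial (b * r ^+ k).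
Proof. by exists k%:Z, 0; rewrite expr0z mulr1. Qed.

Lemma b_monomialVr y : b_monomial y -> b_monomial (y / r).
Proof. by case=> e [e' ->]; exists (e - 1), e'; rewrite expfzDr // exprN1; ring. Qed.

Lemma b_monomialMt y e : b_monomial y -> b_monomial (y * t ^ e).
Proof. by case=> e1 [e2 ->]; exists e1, (e2 + e); rewrite expfzDr // mulrA. Qed.

Lemma theta_b_monomial_neq0 y : b_monomial y -> theta p y != 0.
Proof. by case=> e [e' ->]. Qed.

Lemma pochR_nseq0 y : pochR p q t n y O O = 1.
Proof. by apply: big1 => i _; rewrite part_nseq0 subrr poch0. Qed.

Lemma pochP_nseq0 y : pochP p q t n y O = 1.
Proof. by apply: big1 => i _; rewrite part_nseq0 poch0. Qed.

Lemma Hfun_nseq0 B : Hfun p q t n B O O = 1.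
Proof.
by rewrite /Hfun /= !big1 ?mulr1 // => i _; apply: big1 => j _;
  rewrite !part_nseq0 subrr !poch0 !(mulr1, invr1).
Qed.

Lemma W1_nseq0 y A B : b_monomial B -> W1 p q t n y A B O O = 1.
Proof.
move=> mB; rewrite /W1 interlace_nseq0 Hfun_nseq0 !pochR_nseq0 !pochP_nseq0.
rewrite big1 ?(mulr1, invr1) // => i _.
rewrite !part_nseq0 muln0 expr0 mulr1 !poch0 subrr mulr0 expr0z !(mulr1, invr1).
exact/divff/theta_b_monomial_neq0/b_monomialMt.
Qed.

Lemma Wm_nseq0 xs A B : b_monomial B -> Wm p q t n xs A B O O = 1.
Proof.
elim: xs A B => [|y [|y' zs] IH] A B mB; first by rewrite /= eqxx.
  exact: W1_nseq0.
rewrite Wm_cons // part_nseq0 boxes0 big_cons big_nil interlace_nseq0 addr0.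
rewrite W1_nseq0 ?IH ?mulr1 //.
exact: (b_monomialMt _ (size (y' :: zs))%:Z).
Qed.

Lemma omega1_at1_nseq0 A B : b_monomial B -> omega1 p q t n 1 r A B O O = 1.
Proof.
move=> mB; rewrite /omega1 !pochR_nseq0 !pochP_nseq0 Wm_nseq0; last first.
  exact/b_monomialMt/b_monomialVr.
rewrite [X in _ * X * _]big1 => [|i _]; last first.
  by apply: big1 => j _; rewrite !part_nseq0 subrr addn0 !poch0 !(mulr1, invr1).
rewrite big1 ?(mulr1, invr1) // => i _.
rewrite part_nseq0 muln0 !expr0 !mulr1.
exact/divff/theta_b_monomial_neq0/b_monomialMt/b_monomialVr.
Qed.

Lemma omega1_at1 A B lam : b_monomial B -> size lam = n -> sorted geq lam ->
  omega1 p q t n 1 r A B lam O = if lam == O then 1 else 0.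
Proof.
move=> mB lam_n lam_sorted; have [-> | lam_ne] := eqVneq lam O.
  exact: omega1_at1_nseq0.
apply: omega1_at1_eq0; rewrite ?part_nseq0 //.
  by move: lam_ne; rewrite -lam_n; case: (lam).
by apply: sorted_geq_part1_gt0; rewrite ?lam_n.
Qed.

Lemma omega_desc_powers a k lam : size lam = n -> sorted geq lam ->
  omega p q t n [seq r ^+ (k - j) | j <- iota 0 k.+1] r a b lam O
  = if lam == O then 1 else 0.
Proof.
elim: k lam => [|k IH] lam lam_n lam_sorted.
  by rewrite /= expr0 omega1_at1 //; exists 0, 0; rewrite !expr0z !mulr1.
rewrite desc_powersS omega_cons ?size_map ?size_iota // divff ?expf_neq0 //.
rewrite big_mkcond (bigD1_seq O) ?nseq0_in_boxes ?uniq_boxes //.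
rewrite big1_seq ?Monoid.mulm1 => [|mu /andP[mu_ne mu_in]].
  rewrite sorted_nseq // !subpart_nseq0 IH ?size_nseq ?sorted_nseq // eqxx mulr1.
  by rewrite omega1_at1 //; apply: b_monomialXr.
case: ifP => [/and3P[mu_sorted _ _] | _] //.
rewrite IH //; last exact: size_boxes mu_in.
by case: eqP mu_ne => [-> | _]; rewrite ?eqxx ?mulr0.
Qed.

End ZeroPartition.

Lemma generic_theta_monomial_neq0 (R : realType) (p q t a b r : R[i]) :
  normc p < 1 -> generic_params p q t a b r ->
  forall e e' : int, theta p (b * r ^ e * t ^ e') != 0.
Proof.
move=> p_lt1 [[_ t0 _ b0 r0] gen] e e'.
apply: theta_neq0 => // [|k]; first by rewrite !mulf_neq0 ?expfz_neq0.
apply/eqP => monomial_pk.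
have : q ^ 0 * t ^ e' * a ^ 0 * b ^ 1 * r ^ e = p ^ k.
  by rewrite -monomial_pk !expr0z expr1z; ring.
by case/gen.
Qed.

Theorem mainTheorem19 (R : realType) (p q t a b r : R[i]) (n m : nat)
    (lam : seq nat) :
  `|p| < 1 ->
  generic_params p q t a b r ->
  size lam = n -> sorted geq lam ->
  (1 <= m)%N ->
  omega p q t n [seq r ^+ (m.-1 - j) | j <- iota 0 m] r a b lam (nseq n 0%N)
  = (if all (fun k => k == 0%N) lam then 1 else 0).
Proof.
move=> p_lt1 gen lam_n lam_sorted; case: m => // k _.
have [[_ t0 _ _ r0] _] := gen.
have p_lt1' : normc p < 1 by move: p_lt1; rewrite normc_norm ltcE => /andP[].
rewrite omega_desc_powers //; last exact: generic_theta_monomial_neq0 p_lt1' gen.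
by rewrite -lam_n (sameP eqP (all_pred1P 0%N lam)).
Qed.
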